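(* Let $G$ be a second countable, locally compact, Hausdorff groupoid with a Haar system, let $q\colon G^{(0)}\to G\backslash G^{(0)}$ be the orbit map, and define $G^{(0)}_{\le n}=\{u:|[u]|\le n\}$, $G^{(0)}_{\ge n}=\{u:|[u]|\ge n\}$, $G^{(0)}_n=\{u:|[u]|=n\}$. Then: (a) for $n\ge0$, $G^{(0)}_{\le n}$ is a closed invariant subset of $G^{(0)}$; (b) for $n\ge0$, $G^{(0)}_{\ge n}$ is an open invariant subset of $G^{(0)}$; (c) for $n\ge1$, $G^{(0)}_n$ is invariant and locally closed, hence locally compact; (d) for $n\ge1$, $q(G^{(0)}_n)$ is locally closed in $G\backslash G^{(0)}$ and is Hausdorff in the relative topology.
   Context: $G$ acts on $G^{(0)}$ by $\gamma\cdot s(\gamma)=r(\gamma)$; $[u]=r(s^{-1}(u))$ is the orbit of $u$ and $|[u]|$ its cardinality. $G\backslash G^{(0)}$ is the orbit space with the quotient topology. A subset $F$ is invariant if $F=r(s^{-1}(F))$. *)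

From HB Require Import structures.
From mathcomp Require Import all_boot all_order all_algebra.
From mathcomp Require Import all_classical all_reals all_analysis.
Set Implicit Arguments. Unset Strict Implicit. Unset Printing Implicit Defensive.
Import Order.TTheory GRing.Theory Num.Theory.
Import numFieldNormedType.Exports.
Local Open Scope classical_set_scope.
Local Open Scope ring_scope.
Local Open Scope card_scope.

Section Groupoids.
Variable G : ptopologicalType.

(* The groupoid is the type G; its unit space G^(0) is the subset G0 of G;   *)
(* r, s are range and source; mul x y is the product xy, meaningful when     *)
(* s x = r y (outside composable pairs its value is irrelevant); inv is the  *)
(* inverse.                                                                  *)
Definition composable (s r : G -> G) : set (G * G) :=
  [set p | s p.1 = r p.2].

Definition is_groupoid (G0 : set G) (r s : G -> G) (mul : G -> G -> G)
    (inv : G -> G) : Prop :=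
  [/\ (forall x, G0 (r x) /\ G0 (s x)),
      (forall u, G0 u -> r u = u /\ s u = u),
      (forall x y, s x = r y -> r (mul x y) = r x /\ s (mul x y) = s y),
      (forall x y z, s x = r y -> s y = r z ->
          mul (mul x y) z = mul x (mul y z)) &
      ((forall x, mul (r x) x = x /\ mul x (s x) = x) /\
      (forall x, [/\ r (inv x) = s x, s (inv x) = r x,
                   mul x (inv x) = r x & mul (inv x) x = s x]))].

Definition is_topological_groupoid (G0 : set G) (r s : G -> G)
    (mul : G -> G -> G) (inv : G -> G) : Prop :=
  [/\ is_groupoid G0 r s mul inv,
      {within composable s r, continuous (fun p : G * G => mul p.1 p.2)} &
      continuous inv].

Definition locally_compact_space : Prop :=
  forall x : G, exists K : set G, compact K /\ nbhs x K.

Definition rel_open (Y A : set G) : Prop :=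
  A `<=` Y /\ exists O : set G, open O /\ A = O `&` Y.
Definition rel_closed (Y A : set G) : Prop :=
  A `<=` Y /\ exists C : set G, closed C /\ A = C `&` Y.
Definition rel_locally_closed (Y A : set G) : Prop :=
  exists O C : set G, rel_open Y O /\ rel_closed Y C /\ A = O `&` C.

Definition rel_locally_compact (A : set G) : Prop :=
  forall u, A u -> exists K : set G,
    [/\ compact K, K `<=` A &
        exists W : set G, [/\ open W, W u & W `&` A `<=` K]].

Definition g_orbit (r s : G -> G) (u : G) : set G := r @` (s @^-1` [set u]).

Definition g_invariant (r s : G -> G) (F : set G) : Prop :=
  F = r @` (s @^-1` F).

Definition units_le (G0 : set G) (r s : G -> G) (n : nat) : set G :=
  [set u | G0 u /\ g_orbit r s u #<= `I_n].
Definition units_ge (G0 : set G) (r s : G -> G) (n : nat) : set G :=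
  [set u | G0 u /\ `I_n #<= g_orbit r s u].
Definition units_eq (G0 : set G) (r s : G -> G) (n : nat) : set G :=
  [set u | G0 u /\ g_orbit r s u #= `I_n].

(* A point of the g_orbit space is represented by the g_orbit itself (a subset   *)
(* of G); the g_orbit map is q u = [u].  A set V of orbits is open iff        *)
(* q^{-1}(V) is open in G^(0).                                               *)
Definition orbit_space (G0 : set G) (r s : G -> G) : set (set G) :=
  g_orbit r s @` G0.

Definition q_open (G0 : set G) (r s : G -> G) (V : set (set G)) : Prop :=
  V `<=` orbit_space G0 r s /\
  rel_open G0 (G0 `&` (g_orbit r s @^-1` V)).

Definition q_closed (G0 : set G) (r s : G -> G) (V : set (set G)) : Prop :=
  V `<=` orbit_space G0 r s /\ q_open G0 r s (orbit_space G0 r s `\` V).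

Definition q_locally_closed (G0 : set G) (r s : G -> G) (V : set (set G))
  : Prop :=
  exists O C, q_open G0 r s O /\ q_closed G0 r s C /\ V = O `&` C.

Definition q_rel_hausdorff (G0 : set G) (r s : G -> G) (V : set (set G))
  : Prop :=
  forall a b, V a -> V b -> a <> b ->
    exists O1 O2, [/\ q_open G0 r s O1, q_open G0 r s O2, O1 a, O2 b &
                      O1 `&` O2 `&` V = set0].

Local Notation borelG := (g_sigma_algebraType (@open G)).

Definition compactly_supported {R : realType} (f : G -> R) : Prop :=
  exists K : set G, compact K /\ forall x, ~ K x -> f x = 0.

(* {lam u}_{u in G0}: positive Radon measures on G (finite on compact sets; *)
(* on a second countable LCH space these are automatically regular), with   *)
(* supp lam^u = G^u, continuity of u |-> int f dlam^u for f in C_c(G), and  *)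
(* left invariance int f(xy) dlam^{s(x)}(y) = int f(y) dlam^{r(x)}(y).      *)
Definition is_haar_system {R : realType} (G0 : set G) (r s : G -> G)
    (mul : G -> G -> G) (lam : G -> {measure set borelG -> \bar R}) : Prop :=
  [/\ (forall u, G0 u -> forall K : set G, compact K ->
          (lam u (K : set borelG) < +oo)%E),
      (forall u, G0 u -> forall x : G,
          r x = u <-> (forall U : set G, open U -> U x ->
                         (0 < lam u (U : set borelG))%E)),
      (forall f : G -> R, continuous f -> compactly_supported f ->
          {within G0, continuous
             (fun u => (\int[lam u]_(x in [set: borelG]) (f x)%:E)%E)}) &
      (forall f : G -> R, continuous f -> compactly_supported f ->
         forall x : G,
          (\int[lam (s x)]_(y in [set: borelG]) (f (mul x y))%:E)%E =
          (\int[lam (r x)]_(y in [set: borelG]) (f y)%:E)%E)].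

End Groupoids.

From HB Require Import structures.
From mathcomp Require Import all_boot all_order all_algebra.
From mathcomp Require Import all_classical all_reals all_analysis.
From mathcomp Require Import measurable_realfun.
Import Order.TTheory GRing.Theory Num.Theory.
Set Implicit Arguments. Unset Strict Implicit. Unset Printing Implicit Defensive.
Import numFieldNormedType.Exports.
Local Open Scope classical_set_scope.
Local Open Scope ring_scope.
Local Open Scope card_scope.

(* The Haar system makes the range map open onto the unit space: for a bump
   function f at an arrow x, the integral of f against lam^(r x) is positive;
   by continuity it stays positive against lam^u for units u near r x, and as
   lam^u is supported by r^-1(u), some arrow with range u lies in the support
   of f.  So if the orbit of u has n distinct points in an open set U, then
   separating them by disjoint open sets and following arrows whose source is
   near u shows that every nearby orbit also has n distinct points in U.  With
   U the whole space, |[u]| >= n is open and |[u]| <= n closed; with disjoint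
   neighbourhoods U, U' of two distinct orbits of size n, the saturations of
   the resulting neighbourhoods of u and v separate [u] and [v]. *)

(** * Topology *)

Lemma filter_bigcap_finite (T : Type) (I : choiceType) (D : set I)
    (f : I -> set T) (F : set_system T) :
  Filter F -> finite_set D -> (forall i, D i -> F (f i)) ->
  F (\bigcap_(i in D) f i).
Proof. by move=> FF /finite_fsetP[X ->] Ff; apply: filter_bigI => i /Ff. Qed.

Section hausdorff_separation.
Variable T : topologicalType.
Hypothesis hsdfT : hausdorff_space T.

Lemma hausdorff_separator : exists sep : T -> T -> set T, forall x y, x <> y ->
  [/\ open (sep x y), sep x y x & sep x y `&` sep y x = set0].
Proof.
have : forall p : T * T, exists AB : set T * set T, p.1 <> p.2 ->
    [/\ open AB.1, open AB.2, AB.1 p.1, AB.2 p.2 & AB.1 `&` AB.2 = set0].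
  move=> [x y]; have [xy|/eqP xy] := pselect (x = y).
    by exists (set0, set0) => /= /(_ xy).
  move: hsdfT; rewrite open_hausdorff => /(_ x y xy)[[A B] /= [Ax By]].
  move=> [oA oB /eqP AB].
  by exists (A, B) => _; split => //; exact: set_mem.
move=> /choice [AB ABP].
exists (fun x y => (AB (x, y)).1 `&` (AB (y, x)).2) => x y xy.
have [oA _ Ax _ AB0] := ABP (x, y) xy.
have [_ oB _ Bx _] := ABP (y, x) (nesym xy).
split; [exact: openI | by [] |].
by apply/seteqP; split => // z [[Az _] [_ Bz]]; rewrite -AB0.
Qed.

Lemma closed_fixpoints (f : T -> T) : continuous f -> closed [set x | f x = x].
Proof.
move=> cf; have [sep sepP] := hausdorff_separator.
rewrite -[X in closed X]setCK; apply: open_closedC; rewrite openE => x /= fx.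
have [open_fx sep_fx sep0] := sepP _ _ fx.
have [open_x sepx _] := sepP _ _ (nesym fx).
have : nbhs x (f @^-1` sep (f x) x `&` sep x (f x)).
  by apply: filterI; [apply: cf |]; exact: open_nbhs_nbhs.
apply: filterS => y [/= fy_sep y_sep] fyy.
have : (sep (f x) x `&` sep x (f x)) y by split => //; rewrite -fyy.
by rewrite sep0.
Qed.

Lemma separate_finite_sets (A B : set T) :
  finite_set A -> finite_set B -> A `&` B = set0 ->
  exists U V, [/\ open U, open V, A `<=` U, B `<=` V & U `&` V = set0].
Proof.
have [sep sepP] := hausdorff_separator => finA finB AB0.
have AB a b : A a -> B b -> a <> b.
  move=> Aa Bb ab; have : (A `&` B) a by split => //; rewrite ab.
  by rewrite AB0.
exists (\bigcup_(a in A) (\bigcap_(b in B) sep a b)°).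
exists (\bigcup_(b in B) (\bigcap_(a in A) sep b a)°); split.
- by apply: bigcup_open => a _; exact: open_interior.
- by apply: bigcup_open => b _; exact: open_interior.
- move=> a Aa; exists a => //; apply: filter_bigcap_finite => // b Bb.
  by have [? ? _] := sepP a b (AB a b Aa Bb); exact: open_nbhs_nbhs.
- move=> b Bb; exists b => //; apply: filter_bigcap_finite => // a Aa.
  by have [? ? _] := sepP b a (nesym (AB a b Aa Bb)); exact: open_nbhs_nbhs.
apply/seteqP; split => // z.
move=> [[a Aa /interior_subset Uz] [b Bb /interior_subset Vz]].
have [_ _ sep0] := sepP a b (AB a b Aa Bb).
have : (sep a b `&` sep b a) z by split; [exact: Uz | exact: Vz].
by rewrite sep0.
Qed.

Lemma separate_points n (g : nat -> T) : {in `I_n &, injective g} ->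
  exists V : nat -> set T,
    (forall k, (k < n)%N -> open (V k) /\ V k (g k)) /\
    (forall i j, (i < n)%N -> (j < n)%N -> i != j -> V i `&` V j = set0).
Proof.
have [sep sepP] := hausdorff_separator => g_inj.
have gP i j : (i < n)%N -> (j < n)%N -> i != j -> g i <> g j.
  by move=> i_n j_n /eqP ij gij; apply: ij; apply: g_inj; rewrite ?inE.
exists (fun k => (\bigcap_(j in `I_n `\ k) sep (g k) (g j))°); split.
  move=> k k_n; split; first exact: open_interior.
  apply: filter_bigcap_finite; first exact/finite_setD/finite_II.
  move=> j [j_n /eqP jk]; rewrite eq_sym in jk.
  by have [? ? _] := sepP _ _ (gP k j k_n j_n jk); exact: open_nbhs_nbhs.
move=> i j i_n j_n ij; apply/seteqP; split => // z.
move=> [/interior_subset Viz /interior_subset Vjz].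
have [_ _ sep0] := sepP _ _ (gP i j i_n j_n ij).
have : (sep (g i) (g j) `&` sep (g j) (g i)) z.
  by split; [apply: Viz; split => //; apply/eqP; rewrite eq_sym |
             apply: Vjz; split => //; apply/eqP].
by rewrite sep0.
Qed.

End hausdorff_separation.

Lemma rel_open_locally (T : ptopologicalType) (Y A : set T) : A `<=` Y ->
  (forall u, A u -> exists W, [/\ open W, W u & W `&` Y `<=` A]) ->
  rel_open Y A.
Proof.
move=> AY Aloc; split => //.
exists (\bigcup_(W in [set W | open W /\ W `&` Y `<=` A]) W); split.
  by apply: bigcup_open => W [].
apply/seteqP; split => [u Au|u [[W [_ WA] Wu] Yu]]; last exact: WA.
by have [W [oW Wu WA]] := Aloc u Au; split; [exists W | exact: AY].
Qed.

Lemma rel_closedD (T : ptopologicalType) (Y A : set T) :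
  rel_open Y A -> rel_closed Y (Y `\` A).
Proof.
move=> [AY [V [oV AV]]]; split; first exact: subDsetl.
exists (~` V); split; first exact: open_closedC.
by rewrite AV setDIr setDv setU0 setDE setIC.
Qed.

Lemma locally_compact_setT (T : ptopologicalType) :
  locally_compact_space T -> hausdorff_space T -> locally_compact [set: T].
Proof.
move=> lcT hsdfT x _; have [K [cK Kx]] := lcT x.
by exists K; [rewrite withinET | split => //; exact: compact_closed].
Qed.

Lemma bump_function (R : realType) (T : ptopologicalType) :
  locally_compact_space T -> hausdorff_space T ->
  forall (x : T) (U : set T), open U -> U x ->
  exists f : T -> R, [/\ continuous f, compactly_supported f,
    (forall y, 0 <= f y), f x = 1 & (forall y, f y != 0 -> U y)].
Proof.
move=> lcT hsdfT x U oU Ux; have [K [cK Kx]] := lcT x.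
pose W := K° `&` U; have oW : open W by apply: openI => //; exact: open_interior.
have creg := @locally_compact_completely_regular T R
  (locally_compact_setT lcT hsdfT) hsdfT.
have nnWx : ~ (~` W) x by apply.
have /(@uniform_separatorP _ R)[f [cf f01 fx0 fW1]] :=
  creg x (~` W) (open_closedC oW) nnWx.
have f1 y : ~ W y -> f y = 1 by move=> nWy; exact: fW1 (imageP f nWy).
exists (fun y => 1 - f y); split.
- by move=> y; apply: cvgB; [exact: cvg_cst | exact: cf].
- by exists K; split => // y nKy; rewrite f1 ?subrr // => -[/interior_subset].
- move=> y; have : `[0, 1]%classic (f y) by apply: f01; exists y.
  by rewrite /= in_itv /= subr_ge0 => /andP[].
- by rewrite (fx0 _ (imageP f (erefl x))) subr0.
move=> y /eqP fy0; apply: contrapT => nUy; apply: fy0.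
by rewrite f1 ?subrr // => -[].
Qed.

(** * Borel measures *)

Local Notation borel T := (g_sigma_algebraType (@open T)).

Lemma open_measurable_borel (T : ptopologicalType) (U : set T) :
  open U -> measurable (U : set (borel T)).
Proof. exact: sub_sigma_algebra. Qed.

Lemma continuous_measurable_EFin (R : realType) (T : ptopologicalType)
    (f : T -> R) :
  continuous f -> measurable_fun [set: borel T] (EFin \o f).
Proof.
move=> cf; apply/measurable_EFinP.
apply: (measurability _ (RGenOpens.measurableE R)).
move=> _ [_ [a [b ->] <-]]; rewrite setTI; apply: open_measurable_borel.
by move/continuousP: cf; apply; exact: interval_open.
Qed.

Lemma negligible_bigcup_countable d (T : measurableType d) (R : realType)
    (mu : {measure set T -> \bar R}) (I : Type) (D : set I) (F : I -> set T) :
  countable D -> (forall i, D i -> mu.-negligible (F i)) ->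
  mu.-negligible (\bigcup_(i in D) F i).
Proof.
move=> /countable_injP[h h_inj] FD.
pose E k := \bigcup_(i in [set i | D i /\ h i = k]) F i.
have cover_E : \bigcup_(i in D) F i `<=` \bigcup_k E k.
  by move=> x [i Di Fix]; exists (h i) => //; exists i.
apply: negligibleS cover_E _.
apply: negligible_bigcup => k.
have [[i [Di hik]]|no_i] := pselect (exists i, D i /\ h i = k).
  apply: negligibleS (FD i Di) => x [j [Dj hjk] Fjx].
  by rewrite (h_inj i j) ?inE // hik hjk.
suff -> : E k = set0 by exact: negligible_set0.
by apply/seteqP; split => // x [i Di _]; apply: no_i; exists i.
Qed.

Lemma negligible_locally_null (R : realType) (T : ptopologicalType)
    (mu : {measure set (borel T) -> \bar R}) (S : set T) :
  @second_countable T ->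
  (forall y, S y -> exists N, [/\ open N, N y & mu N = 0%E]) ->
  mu.-negligible (S : set (borel T)).
Proof.
move=> [B cB [Bo B_basis]] S_null.
pose B0 := [set b | B b /\ mu (b : set (borel T)) = 0%E].
have S_cover : (S : set (borel T)) `<=` \bigcup_(b in B0) (b : set (borel T)).
  move=> y Sy; have [N [oN Ny N0]] := S_null y Sy.
  have [b [Bb by_] bN] := B_basis y N (open_nbhs_nbhs (conj oN Ny)).
  exists b => //; split => //; apply/eqP; rewrite eq_le measure_ge0 andbT -N0.
  by rewrite le_measure ?inE //; apply: open_measurable_borel; [exact: Bo|].
apply: (negligibleS S_cover).
apply: negligible_bigcup_countable.
  by apply: sub_countable cB; apply: subset_card_le => b [].
move=> b [Bb b0]; apply/negligibleP => //.
by apply: open_measurable_borel; exact: Bo.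
Qed.

(** * Finite cardinals *)

Lemma card_leI_injP (T : pointedType) (A : set T) n : `I_n #<= A <->
  exists g : nat -> T, {in `I_n &, injective g} /\
                       (forall k, (k < n)%N -> A (g k)).
Proof.
split.
  by move/pcard_leP/injfunPex => -[g gA g_inj]; exists g; split => // k /gA.
by move=> [g [g_inj gA]]; apply/pcard_leP/injfunPex; exists g.
Qed.

Lemma card_leI_Nge (T : Type) (A : set T) n : A #<= `I_n <-> ~ (`I_n.+1 #<= A).
Proof.
split => [An Sn|nSn]; first by have := card_le_trans Sn An; rewrite card_le_II ltnn.
have [[m Am]|/infiniteP infA] := pselect (finite_set A).
  rewrite (card_le_eql Am) card_le_II; rewrite (card_le_eqr Am) card_le_II in nSn.
  by rewrite leqNgt; apply/negP.
by exfalso; apply: nSn; exact: card_le_trans (subset_card_le (subsetT _)) infA.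
Qed.

Lemma card_leI_setI_sub (T : pointedType) (A U : set T) n :
  A #<= `I_n -> `I_n #<= A `&` U -> A `<=` U.
Proof.
move=> An /card_leI_injP[g [g_inj gAU]] a Aa; apply: contrapT => nUa.
move/card_leI_Nge: An; apply; apply/card_leI_injP.
have gU k : (k < n)%N -> g k <> a by move=> /gAU[_ Ugk] gka; rewrite gka in Ugk.
exists (fun k => if k == n then a else g k); split; last first.
  move=> k; rewrite ltnS; case: eqP => // /eqP kn k_le_n.
  by apply: (gAU k _).1; rewrite ltn_neqAle kn.
move=> i j; rewrite !inE /= !ltnS => i_n j_n.
have [->|/eqP ni] := eqP; have [->|/eqP nj] := eqP => //.
- by move=> agj; case: (gU j _ (esym agj)); rewrite ltn_neqAle nj.
- by move=> gia; case: (gU i _ gia); rewrite ltn_neqAle ni.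
by move=> gij; apply: g_inj => //; rewrite inE /= ltn_neqAle ?ni ?nj.
Qed.

(** * Groupoids *)

Section groupoid_algebra.
Variables (G : ptopologicalType) (G0 : set G) (r s : G -> G).
Variables (mul : G -> G -> G) (inv : G -> G).
Hypothesis grpG : is_groupoid G0 r s mul inv.

Lemma unitsE : G0 = [set x | r x = x].
Proof.
have [rsG0 unitG0 _ _ _] := grpG; apply/seteqP; split => x /=.
  by case/unitG0.
by move=> <-; case: (rsG0 x).
Qed.

Lemma g_orbit_rs g : g_orbit r s (r g) = g_orbit r s (s g).
Proof.
have [_ _ rs_mul _ [_ inv_ax]] := grpG.
apply/seteqP; split => _ [d /= sd <-].
  by have [rdg sdg] := rs_mul d g sd; exists (mul d g).
have [rinv sinv _ _] := inv_ax g.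
have sd' : s d = r (inv g) by rewrite rinv.
by have [rdg sdg] := rs_mul _ _ sd'; exists (mul d (inv g)); rewrite //= sdg.
Qed.

Lemma g_orbit_refl u : G0 u -> g_orbit r s u u.
Proof. by have [_ unitG0 _ _ _] := grpG => /unitG0[ru su]; exists u. Qed.

Lemma g_orbit_eq u v : g_orbit r s u v -> g_orbit r s v = g_orbit r s u.
Proof. by move=> [g /= <- <-]; exact: g_orbit_rs. Qed.

Lemma invK : involutive inv.
Proof.
have [_ _ _ mulA [unit_mul inv_ax]] := grpG => x.
have [rx sx xV Vx] := inv_ax x; have [rV sV VV VVV] := inv_ax (inv x).
have -> : inv (inv x) = mul (inv (inv x)) (mul (inv x) x).
  by rewrite Vx -rx -sV; case: (unit_mul (inv (inv x))).
by rewrite -mulA ?sV ?sx // VVV sx; case: (unit_mul x).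
Qed.

Lemma g_invariant_orbit_prop (P : set G -> Prop) :
  g_invariant r s [set u | G0 u /\ P (g_orbit r s u)].
Proof.
have [rsG0 unitG0 _ _ _] := grpG.
apply/seteqP; split => [u [G0u Pu]|_ [g /= [_ Pg] <-]].
  by have [ru su] := unitG0 u G0u; exists u; rewrite //= su.
by split; [case: (rsG0 g) | rewrite g_orbit_rs].
Qed.

Lemma orbit_saturationE (W : set G) :
  G0 `&` g_orbit r s @^-1` (g_orbit r s @` (W `&` G0)) = r @` (s @^-1` W).
Proof.
have [rsG0 _ _ _ _] := grpG; apply/seteqP; split.
  move=> z [G0z [w [Ww G0w] /= orbit_wz]].
  have : g_orbit r s w z by rewrite orbit_wz; exact: g_orbit_refl.
  by case=> g /= sg <-; exists g => //=; rewrite sg.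
move=> _ [g /= Wsg <-]; split; first by case: (rsG0 g).
by exists (s g); [split => //; case: (rsG0 g) | rewrite g_orbit_rs].
Qed.

Lemma units_eqE n : units_eq G0 r s n = units_ge G0 r s n `&` units_le G0 r s n.
Proof.
apply/seteqP; split => [u [G0u /card_eqPle[le_n ge_n]]|u [[G0u ge_n] [_ le_n]]].
  by split.
by split => //; apply/card_eqPle.
Qed.

Lemma units_leE n : units_le G0 r s n = G0 `\` units_ge G0 r s n.+1.
Proof.
apply/seteqP; split => u [G0u]; first by move=> /card_leI_Nge le_n; split => // -[].
by move=> ge_Sn; split => //; apply/card_leI_Nge => Sn; apply: ge_Sn.
Qed.

End groupoid_algebra.

Lemma preimage_image_prop (T U : Type) (D : set T) (f : T -> U) (P : set U) :
  D `&` f @^-1` (f @` [set x | D x /\ P (f x)]) = [set x | D x /\ P (f x)].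
Proof.
apply/seteqP; split => [x [Dx [y [_ Py] /= fyx]]|x [Dx Px]].
  by split => //; rewrite -fyx.
by split => //; exists x.
Qed.

Lemma preimage_image_propC (T U : Type) (D : set T) (f : T -> U) (P : set U) :
  D `&` f @^-1` (f @` D `\` f @` [set x | D x /\ P (f x)]) =
  [set x | D x /\ ~ P (f x)].
Proof.
apply/seteqP; split => [x [Dx [_ /= nPx]]|x [Dx nPx]].
  by split => // Px; apply: nPx; exists x.
by split => //; split; [exists x | case=> y [_ Py] fyx; apply: nPx; rewrite -fyx].
Qed.

Section topological_groupoid.
Variables (G : ptopologicalType) (G0 : set G) (r s : G -> G).
Variables (mul : G -> G -> G) (inv : G -> G).
Hypothesis tgrpG : is_topological_groupoid G0 r s mul inv.

Lemma continuous_r : continuous r.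
Proof.
have [[_ _ _ _ [_ inv_ax]] mul_cont inv_cont] := tgrpG.
have -> : r = (fun x => mul x (inv x)) by apply: funext => x; case: (inv_ax x).
move=> x W; have x_comp : composable s r (x, inv x).
  by rewrite /composable; case: (inv_ax x).
have pair_cvg : (fun y => (y, inv y)) @ x --> (x, inv x).
  exact: cvg_pair (inv_cont x).
move/subspace_continuousP: mul_cont => /(_ _ x_comp) mul_cont_x.
move=> /mul_cont_x; rewrite /= nbhs_simpl /within => /pair_cvg near_x.
apply: (@filterS _ (nbhs x) _ _ _ _ near_x) => y /=; apply.
by rewrite /composable /=; case: (inv_ax y).
Qed.

Lemma continuous_s : continuous s.
Proof.
have [[_ _ _ _ [_ inv_ax]] _ inv_cont] := tgrpG.
have -> : s = r \o inv by apply: funext => y /=; case: (inv_ax y).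
by move=> x; apply: continuous_comp; [exact: inv_cont | exact: continuous_r].
Qed.

Lemma closed_units : hausdorff_space G -> closed G0.
Proof.
have [grpG _ _] := tgrpG => hsdfG.
by rewrite (unitsE grpG); exact: closed_fixpoints continuous_r.
Qed.

End topological_groupoid.

(** * Haar systems and orbit sizes *)

Section haar_system.
Variables (R : realType) (G : ptopologicalType) (G0 : set G) (r s : G -> G).
Variables (mul : G -> G -> G) (inv : G -> G).
Variable lam : G -> {measure set (borel G) -> \bar R}.
Hypothesis tgrpG : is_topological_groupoid G0 r s mul inv.
Hypothesis scG : @second_countable G.
Hypothesis lcG : locally_compact_space G.
Hypothesis hsdfG : hausdorff_space G.
Hypothesis haarG : is_haar_system G0 r s mul lam.

Lemma haar_integral_gt0 (x : G) (f : G -> R) :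
  continuous f -> (forall y, 0 <= f y) -> 0 < f x ->
  (0 < \int[lam (r x)]_(y in [set: borel G]) (f y)%:E)%E.
Proof.
move=> cf f_ge0 fx_gt0; have [[rsG0 _ _ _ _] _ _] := tgrpG.
have [_ haar_supp _ _] := haarG.
pose V := f @^-1` [set z | f x / 2 < z].
have oV : open V by move/continuousP: cf; apply; exact: open_gt.
have Vx : V x by rewrite /V /= ltr_pdivrMr // ltr_pMr // ltr1n.
have mV := open_measurable_borel oV.
have lamV : (0 < lam (r x) V)%E.
  exact: (haar_supp _ (rsG0 x).1 x).1 erefl V oV Vx.
have mf := continuous_measurable_EFin cf.
apply: (@lt_le_trans _ _ (\int[lam (r x)]_(y in V) (f y)%:E)%E); last first.
  by apply: ge0_subset_integral => // y _; rewrite lee_fin.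
apply: (@lt_le_trans _ _ (\int[lam (r x)]_(y in V) (cst (f x / 2)%:E y))%E).
  by rewrite integral_cst // mule_gt0 // lte_fin divr_gt0.
apply: ge0_le_integral => //.
- by move=> y _; rewrite /= lee_fin divr_ge0 // ltW.
- exact: measurable_funTS mf.
- by move=> y; rewrite /V /= lee_fin => /ltW.
Qed.

Lemma haar_integral_eq0 (u : G) (f : G -> R) :
  G0 u -> continuous f -> (forall y, f y != 0 -> r y <> u) ->
  (\int[lam u]_(y in [set: borel G]) (f y)%:E = 0)%E.
Proof.
move=> G0u cf f_ru; have [_ haar_supp _ _] := haarG.
have f_null : (lam u).-negligible ([set y | f y != 0] : set (borel G)).
  apply: negligible_locally_null scG _ => y /f_ru ryu.
  (* the support of lam^u is r^-1(u), so y has a lam^u-null neighbourhood *)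
  have : ~ (forall N : set G, open N -> N y -> (0 < lam u N)%E).
    by move/(haar_supp u G0u y).
  move=> /existsNP[N /not_implyP[oN /not_implyP[Ny /negP]]].
  rewrite -leNgt => N_le0; exists N; split => //.
  by apply/eqP; rewrite eq_le N_le0 measure_ge0.
have mf := continuous_measurable_EFin cf.
rewrite (@ae_eq_integral _ _ _ (lam u) _ (cst 0%E)) ?integral0 //.
apply: negligibleS f_null => y /= fy_ne0; apply/negP => /eqP fy0.
by apply: fy_ne0 => _; rewrite fy0.
Qed.

Lemma rel_open_range (U : set G) : open U -> rel_open G0 (r @` U).
Proof.
move=> oU; have [[rsG0 _ _ _ _] _ _] := tgrpG; have [_ _ haar_cont _] := haarG.
apply: rel_open_locally => [_ [x _ <-]|_ [x Ux <-]]; first by case: (rsG0 x).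
have [f [cf csf f_ge0 fx1 fU]] := bump_function R lcG hsdfG oU Ux.
have G0rx : G0 (r x) by case: (rsG0 x).
have int_gt0 : nbhs (\int[lam (r x)]_(y in [set: borel G]) (f y)%:E)%E
                    [set z | 0 < z]%E.
  apply: open_nbhs_nbhs; split; first exact: open_ereal_gt_ereal.
  by apply: haar_integral_gt0 => //; rewrite fx1.
have /subspace_continuousP/(_ _ G0rx)/(_ _ int_gt0) := haar_cont f cf csf.
rewrite /= nbhs_simpl /within /= nbhsE => -[W [oW Wrx] W_gt0].
exists W; split => // u [Wu G0u]; apply: contrapT => no_preimage.
have := W_gt0 u Wu G0u; rewrite /from_subspace /= haar_integral_eq0 ?ltxx //.
move=> y /fU Uy ryu.
by apply: no_preimage; exists y.
Qed.

Lemma rel_open_source (U : set G) : open U -> rel_open G0 (s @` U).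
Proof.
move=> oU; have [grpG _ inv_cont] := tgrpG; have [_ _ _ _ [_ inv_ax]] := grpG.
have -> : s @` U = r @` (inv @^-1` U).
  apply/seteqP; split => _ [x Ux <-]; exists (inv x).
  - by rewrite /= (invK grpG).
  - by case: (inv_ax x).
  - by [].
  - by case: (inv_ax x).
by apply: rel_open_range; move/continuousP: inv_cont; apply.
Qed.

Lemma card_orbit_setI_ge_near n u (U : set G) : open U ->
  `I_n #<= g_orbit r s u `&` U ->
  exists W, [/\ open W, W u &
    forall w, G0 w -> W w -> `I_n #<= g_orbit r s w `&` U].
Proof.
move=> oU /card_leI_injP[g [g_inj g_orbitU]].
have [V [oV V0]] := separate_points hsdfG g_inj.
have near_k k : exists Wk, (k < n)%N -> [/\ open Wk, Wk u &
    forall w, G0 w -> Wk w -> exists2 y, (V k `&` U) (r y) & s y = w].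
  have [k_n|] := ltnP k n; last by exists setT.
  have [[oVk Vkg] [[a /= sa ra] Ug]] := (oV k k_n, g_orbitU k k_n).
  have oVU : open (r @^-1` (V k `&` U)).
    by move/continuousP: (continuous_r tgrpG); apply; exact: openI.
  have [_ [Wk [oWk sVU]]] := rel_open_source oVU.
  exists Wk => _; split => //.
    have : (s @` (r @^-1` (V k `&` U))) u by exists a; rewrite //= ra.
    by rewrite sVU => -[].
  move=> w G0w Wkw; have : (Wk `&` G0) w by [].
  by rewrite -sVU => -[y ? <-]; exists y.
have [Wk WkP] := choice near_k.
exists (\bigcap_(k in `I_n) Wk k)°; split; first exact: open_interior.
  apply: filter_bigcap_finite (finite_II n) _ => k k_n.
  by have [? ? _] := WkP k k_n; exact: open_nbhs_nbhs.
move=> w G0w /interior_subset Wkw.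
have pick_k k : exists y, (k < n)%N -> (V k `&` U) (r y) /\ s y = w.
  have [k_n|] := ltnP k n; last by exists w.
  by have [_ _ /(_ w G0w (Wkw k k_n))[y ? ?]] := WkP k k_n; exists y.
have [y yP] := choice pick_k.
apply/card_leI_injP; exists (r \o y); split.
  move=> i j; rewrite !inE /= => i_n j_n ryij; apply/eqP; apply: contraT => ij.
  have [[Vi _] _] := yP i i_n; have [[Vj _] _] := yP j j_n.
  have : (V i `&` V j) (r (y i)) by split; rewrite // ryij.
  by rewrite V0.
by move=> k k_n; have [[_ Uk] syk] := yP k k_n; split => //; exists (y k).
Qed.

Lemma rel_open_units_ge n : rel_open G0 (units_ge G0 r s n).
Proof.
apply: rel_open_locally => [u []//|u [G0u ge_n]].
rewrite -[g_orbit r s u]setIT in ge_n.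
have [W [oW Wu W_ge]] := card_orbit_setI_ge_near openT ge_n.
exists W; split => // w [Ww G0w]; split => //.
by rewrite -[g_orbit r s w]setIT; exact: W_ge.
Qed.

Lemma rel_closed_units_le n : rel_closed G0 (units_le G0 r s n).
Proof. by rewrite units_leE; apply: rel_closedD; exact: rel_open_units_ge. Qed.

Lemma rel_locally_compact_units_eq n : rel_locally_compact (units_eq G0 r s n).
Proof.
move=> u eq_u; have [_ [Vge [oVge ge_nE]]] := rel_open_units_ge n.
have [_ [Cle [cCle le_nE]]] := rel_closed_units_le n.
have [K [cK Ku]] := lcG u.
have Vge_u : Vge u by move: eq_u; rewrite units_eqE ge_nE => -[[]].
have [M Mu clM_sub] := compact_regular hsdfG cK Ku
  (filterI Ku (open_nbhs_nbhs (conj oVge Vge_u))).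
exists (closure M `&` Cle `&` G0); split.
- apply: subclosed_compact cK _; last by move=> x [[/clM_sub[]]].
  apply: closedI; last exact: (closed_units tgrpG hsdfG).
  by apply: closedI => //; exact: closed_closure.
- move=> x [[/clM_sub[_ Vge_x] Cle_x] G0x]; rewrite units_eqE ge_nE le_nE.
  by split; split.
exists M°; split; [exact: open_interior | by [] |].
move=> x [/interior_subset Mx]; rewrite units_eqE le_nE => -[_ [Cle_x G0x]].
by split => //; split => //; exact: subset_closure.
Qed.

Lemma q_open_saturation (W : set G) : open W ->
  q_open G0 r s (g_orbit r s @` (W `&` G0)).
Proof.
have [grpG _ _] := tgrpG => oW; split; first by move=> _ [u [_ G0u] <-]; exists u.
rewrite (orbit_saturationE grpG); apply: rel_open_range.
by move/continuousP: (continuous_s tgrpG); apply.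
Qed.

Lemma q_locally_closed_units_eq n :
  q_locally_closed G0 r s (g_orbit r s @` units_eq G0 r s n).
Proof.
have image_sub (P : set G -> Prop) :
    g_orbit r s @` [set u | G0 u /\ P (g_orbit r s u)] `<=` orbit_space G0 r s.
  by move=> _ [u [G0u _] <-]; exists u.
exists (g_orbit r s @` units_ge G0 r s n), (g_orbit r s @` units_le G0 r s n).
split; [|split].
- split; first exact: (image_sub (fun o => `I_n #<= o)).
  rewrite (preimage_image_prop G0 (g_orbit r s) (fun o => `I_n #<= o)).
  exact: rel_open_units_ge.
- split; first exact: (image_sub (fun o => o #<= `I_n)); split; first by move=> ? [].
  rewrite (preimage_image_propC G0 (g_orbit r s) (fun o => o #<= `I_n)).
  have -> : [set u | G0 u /\ ~ (g_orbit r s u #<= `I_n)] = units_ge G0 r s n.+1.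
    apply/seteqP; split => u [G0u u_n]; split => //.
      by apply: contrapT => /card_leI_Nge.
    by move/card_leI_Nge; apply.
  exact: rel_open_units_ge.
apply/seteqP; split => [_ [u + <-]|_ [[u ge_u <-] [v le_v orbit_vu]]].
  by rewrite units_eqE => -[ge_u le_u]; split; exists u.
exists u => //; rewrite units_eqE; split => //.
by case: le_v => G0v; rewrite orbit_vu; case: ge_u.
Qed.

Lemma q_rel_hausdorff_units_eq n :
  q_rel_hausdorff G0 r s (g_orbit r s @` units_eq G0 r s n).
Proof.
have [grpG _ _] := tgrpG.
move=> _ _ [u [G0u eq_u] <-] [v [G0v eq_v] <-] uv.
have fin_u : finite_set (g_orbit r s u) by apply/finite_setP; exists n.
have fin_v : finite_set (g_orbit r s v) by apply/finite_setP; exists n.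
have disj : g_orbit r s u `&` g_orbit r s v = set0.
  apply/seteqP; split => // z [uz vz]; apply: uv.
  by rewrite -(g_orbit_eq grpG uz) -(g_orbit_eq grpG vz).
have [U [V [oU oV uU vV UV0]]] := separate_finite_sets hsdfG fin_u fin_v disj.
have ge_n (w : G) (X : set G) : g_orbit r s w #= `I_n -> g_orbit r s w `<=` X ->
    `I_n #<= g_orbit r s w `&` X.
  by move=> /card_eqPle[_ ?] wX; rewrite setIidl.
have [W [oW Wu W_ge]] := card_orbit_setI_ge_near oU (ge_n _ _ eq_u uU).
have [W' [oW' W'v W'_ge]] := card_orbit_setI_ge_near oV (ge_n _ _ eq_v vV).
exists (g_orbit r s @` (W `&` G0)), (g_orbit r s @` (W' `&` G0)); split.
- exact: q_open_saturation.
- exact: q_open_saturation.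
- by exists u.
- by exists v.
apply/seteqP; split => // _ [[[w [Ww G0w] <-] [w' [W'w' G0w'] ww']] [z [_ eq_z] zw]].
have le_n : g_orbit r s w #<= `I_n by rewrite -zw; case/card_eqPle: eq_z.
have le_n' : g_orbit r s w' #<= `I_n by rewrite ww'.
have wU := card_leI_setI_sub le_n (W_ge w G0w Ww).
have := card_leI_setI_sub le_n' (W'_ge w' G0w' W'w'); rewrite ww' => wV.
have : (U `&` V) w by split; [apply: wU | apply: wV]; exact: (g_orbit_refl grpG).
by rewrite UV0.
Qed.

End haar_system.

Unset Implicit Arguments.

Theorem proposition4p6 (R : realType) (G : ptopologicalType) (G0 : set G)
    (r s : G -> G) (mul : G -> G -> G) (inv : G -> G)
    (lam : G -> {measure set (g_sigma_algebraType (@open G)) -> \bar R})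
    (Hgrp : is_topological_groupoid G0 r s mul inv)
    (Hsc : @second_countable G) (Hlc : locally_compact_space G)
    (Hhd : @hausdorff_space G)
    (Hhaar : is_haar_system G0 r s mul lam) :
  (forall n : nat,
      rel_closed G0 (units_le G0 r s n) /\ g_invariant r s (units_le G0 r s n)) /\
  (forall n : nat,
      rel_open G0 (units_ge G0 r s n) /\ g_invariant r s (units_ge G0 r s n)) /\
  (forall n : nat, (1 <= n)%N ->
      [/\ g_invariant r s (units_eq G0 r s n),
          rel_locally_closed G0 (units_eq G0 r s n) &
          rel_locally_compact (units_eq G0 r s n)]) /\
  (forall n : nat, (1 <= n)%N ->
      q_locally_closed G0 r s (g_orbit r s @` units_eq G0 r s n) /\
      q_rel_hausdorff G0 r s (g_orbit r s @` units_eq G0 r s n)).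
Proof.
have [grpG _ _] := Hgrp.
have invariant := g_invariant_orbit_prop grpG.
have ge_open := rel_open_units_ge Hgrp Hsc Hlc Hhd Hhaar.
have le_closed := rel_closed_units_le Hgrp Hsc Hlc Hhd Hhaar.
split; [|split; [|split]] => n.
- by split; [exact: le_closed | exact: (invariant (fun o => o #<= `I_n))].
- by split; [exact: ge_open | exact: (invariant (fun o => `I_n #<= o))].
- move=> _; split; first exact: (invariant (fun o => o #= `I_n)).
    exists (units_ge G0 r s n), (units_le G0 r s n).
    by rewrite -units_eqE; split; [exact: ge_open | split; first exact: le_closed].
  exact: (rel_locally_compact_units_eq Hgrp Hsc Hlc Hhd Hhaar).
- move=> _; split; first exact: (q_locally_closed_units_eq Hgrp Hsc Hlc Hhd Hhaar).
  exact: (q_rel_hausdorff_units_eq Hgrp Hsc Hlc Hhd Hhaar).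
Qed.
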